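(* Let $M$ be an even positive integer, $m=\lceil\log_2M\rceil$, and let $h_0,\dots,h_{M-1}$ be the filter coefficients of a wavelet of order $M$, with $h:=\sum_{\ell=0}^{M-1}|h_\ell|$. Then: (i) an $m$-qubit unitary LINPREP with $\mathrm{LINPREP}|0^m\rangle=\sum_{\ell=0}^{M-1}h_\ell|\ell\rangle$ can be executed using $\mathcal{O}(M\log_2M)$ elementary gates and $\lceil\log_2M\rceil$ borrowed qubits; (ii) $m$-qubit unitaries PREP and UNPREP with $\mathrm{PREP}|0^m\rangle=\frac{1}{\sqrt h}\sum_{\ell=0}^{M-1}\sqrt{|h_\ell|}\,|\ell\rangle$ and $\mathrm{UNPREP}^\dagger|0^m\rangle=\frac{1}{\sqrt h}\sum_{\ell=0}^{M-1}\mathrm{sign}(h_\ell)\sqrt{|h_\ell|}\,|\ell\rangle$ can each be executed using $\mathcal{O}(M^{3/2})$ elementary gates and one ancilla qubit.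
   Context: Wavelet of order $M$: real filter coefficients $h_0,\dots,h_{M-1}$ with $\sum_\ell h_\ell=\sqrt2$ and $\sum_\ell h_\ell^2=1$ (coming from an orthonormal wavelet). Elementary gates include arbitrary single-qubit gates (rotations with classically precomputed angles) and CNOT. An ancilla qubit starts and ends in $|0\rangle$; a borrowed qubit may start in any state and is returned to its original state. *)

From HB Require Import structures.
From mathcomp Require Import all_boot all_order all_algebra.
From mathcomp Require Import complex.
Set Implicit Arguments. Unset Strict Implicit. Unset Printing Implicit Defensive.
Import Order.TTheory GRing.Theory Num.Theory.
Local Open Scope ring_scope.

Section Quantum.
Variable R : rcfType.
Local Notation C := (R[i]).

(* bit q of the basis index k (qubit q <-> binary digit q of k) *)
Definition bit (k q : nat) : bool := odd (k %/ 2 ^ q)%N.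
Definition clrbit (k q : nat) : nat := (k - (bit k q) * 2 ^ q)%N.
Definition flipbit (k q : nat) : nat := if bit k q then (k - 2 ^ q)%N else (k + 2 ^ q)%N.

Definition adjmx (p q : nat) (A : 'M[C]_(p, q)) : 'M[C]_(q, p) :=
  (map_mx (@conjc R) A)^T.
Definition is_unitary_mx (p : nat) (U : 'M[C]_p) : Prop := U *m adjmx U = 1%:M.

Definition ket (n k : nat) : 'cV[C]_(2 ^ n) := \col_i (((i : nat) == k)%:R).

Inductive gate (n : nat) :=
| G1 of 'I_n & 'M[C]_2
| CNOT of 'I_n & 'I_n.        (* CNOT (control, target) *)

Definition gate_ok (n : nat) (g : gate n) : Prop :=
  match g with
  | G1 _ U => is_unitary_mx U
  | CNOT c t => c <> t
  end.

Definition gate_mx (n : nat) (g : gate n) : 'M[C]_(2 ^ n) :=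
  match g with
  | G1 q U => \matrix_(r, c)
      (if clrbit r q == clrbit c q
       then U (inord (bit r q)) (inord (bit c q)) else 0)
  | CNOT a t => \matrix_(r, c)
      (((r : nat) == (if bit c a then flipbit c t else (c : nat)))%:R)
  end.

(* a circuit is a list of gates, the head being applied first *)
Definition circuit (n : nat) := seq (gate n).
Definition circuit_ok (n : nat) (c : circuit n) : Prop :=
  foldr (fun g P => gate_ok g /\ P) True c.
Definition circuit_mx (n : nat) (c : circuit n) : 'M[C]_(2 ^ n) :=
  foldl (fun acc g => gate_mx g *m acc) 1%:M c.

(* The circuit c on m + b qubits implements the m-qubit unitary U on the low
   m qubits using b borrowed qubits (the high b qubits): on every basis state
   |x>|y> it acts as (U|x>)|y>, i.e. circuit_mx c = U (x) I. *)
Definition implements_borrowed (m b : nat) (c : circuit (m + b))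
    (U : 'M[C]_(2 ^ m)) : Prop :=
  forall (x : 'I_(2 ^ m)) (y : nat), (y < 2 ^ b)%N ->
    circuit_mx c *m ket (m + b) (x + 2 ^ m * y)%N
    = \sum_(x' < 2 ^ m) U x' x *: ket (m + b) (x' + 2 ^ m * y)%N.

(* The circuit c on m + 1 qubits implements U with one ancilla (the high
   qubit), which starts and ends in |0>. *)
Definition implements_ancilla (m : nat) (c : circuit (m + 1))
    (U : 'M[C]_(2 ^ m)) : Prop :=
  forall x : 'I_(2 ^ m),
    circuit_mx c *m ket (m + 1) x
    = \sum_(x' < 2 ^ m) U x' x *: ket (m + 1) x'.

Definition wavelet_filter (M : nat) (h : 'I_M -> R) : Prop :=
  \sum_(l < M) h l = Num.sqrt 2 /\ \sum_(l < M) h l ^+ 2 = 1.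

End Quantum.

From HB Require Import structures.
From mathcomp Require Import all_boot all_order all_algebra.
From mathcomp Require Import complex.
From mathcomp Require Import zify ring lra.
Set Implicit Arguments. Unset Strict Implicit. Unset Printing Implicit Defensive.
Import Order.TTheory GRing.Theory Num.Theory.

(* A real unit vector v on n qubits is prepared from |0> with at most 3 2^n gates
   (Mottonen et al.): the pair norms w_j = |(v_j, v_(j + 2^(n-1)))| form a unit vector on
   the low n - 1 qubits, prepared recursively, and a rotation of the top qubit by the angle
   of (v_j, v_(j + 2^(n-1))), uniformly controlled by the low qubits, then splits each w_j
   back into its pair.  A rotation uniformly controlled by n qubits is two rotations
   controlled by n - 1 qubits interleaved with two CNOTs, because conjugating a rotation by
   X inverts it; hence 3 2^n - 2 gates.  Padding the M amplitudes to 2^m with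
   m = up_log 2 M, so that 2^m < 2 M, each of LINPREP, PREP and UNPREP^dagger costs at most
   6 M gates, within both O(M log M) and O(M^(3/2)); the borrowed or ancilla qubits stay
   idle, and UNPREP is the adjoint of the circuit preparing its state. *)

Definition bitjoin (t lo : nat) (b : bool) (hi : nat) : nat := lo + 2 ^ t * (b + 2 * hi).

Lemma bitjoin_mod t lo b hi : lo < 2 ^ t -> bitjoin t lo b hi %% 2 ^ t = lo.
Proof. by move=> hlo; rewrite /bitjoin addnC mulnC modnMDl modn_small. Qed.

Lemma bitjoin_div t lo b hi : lo < 2 ^ t -> bitjoin t lo b hi %/ 2 ^ t.+1 = hi.
Proof.
move=> hlo; rewrite expnS mulnC divnMA /bitjoin addnC mulnC divnMDl ?expn_gt0 //.
by rewrite (divn_small hlo) addn0 addnC mulnC divnMDl // divn_small ?addn0; case: b.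
Qed.

Lemma bitD_high r t x a : a < t -> bit (r + 2 ^ t * x) a = bit r a.
Proof.
move=> hat; rewrite /bit -(subnK (ltnW hat)) expnD mulnAC divnDMl ?expn_gt0 //.
by rewrite oddD oddM oddX subn_eq0 leqNgt hat /= addbF.
Qed.

Lemma bit_bitjoin t lo b hi : lo < 2 ^ t -> bit (bitjoin t lo b hi) t = b.
Proof.
move=> hlo; rewrite /bit /bitjoin addnC mulnC divnMDl ?expn_gt0 // (divn_small hlo).
by rewrite addn0 oddD oddM /= addbF; case: b.
Qed.

Lemma bit_bitjoin_high t lo b hi a : t < a -> lo < 2 ^ t ->
  bit (bitjoin t lo b hi) a = bit hi (a - t.+1).
Proof.
move=> hta hlo; rewrite /bit -[in 2 ^ a](subnKC hta) expnD divnMA bitjoin_div //.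
Qed.

Lemma bitjoinE k t : k = bitjoin t (k %% 2 ^ t) (bit k t) (k %/ 2 ^ t.+1).
Proof.
rewrite /bitjoin /bit expnSr divnMA {1}(divn_eq k (2 ^ t)) {1}(divn_eq (k %/ 2 ^ t) 2).
by rewrite modn2; lia.
Qed.

Lemma bitjoin_lt t lo b hi N : t < N -> lo < 2 ^ t -> hi < 2 ^ (N - t.+1) ->
  bitjoin t lo b hi < 2 ^ N.
Proof.
move=> htN hlo hhi; rewrite -(subnKC htN) expnD expnS /bitjoin.
have : 2 ^ t * (b + 2 * hi).+1 <= 2 ^ t * (2 * 2 ^ (N - t.+1)).
  by rewrite leq_mul2l; apply/orP; right; case: b; lia.
lia.
Qed.

Lemma mod_pow2_lt k t : k %% 2 ^ t < 2 ^ t.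
Proof. by rewrite ltn_mod expn_gt0. Qed.

Lemma flipbit_bitjoin t lo b hi : lo < 2 ^ t ->
  flipbit (bitjoin t lo b hi) t = bitjoin t lo (~~ b) hi.
Proof.
move=> hlo; rewrite /flipbit bit_bitjoin // /bitjoin.
by case: b => /=; rewrite ?mulnDr ?muln1 ?muln0; lia.
Qed.

Lemma clrbit_bitjoin t lo b hi : lo < 2 ^ t ->
  clrbit (bitjoin t lo b hi) t = bitjoin t lo false hi.
Proof.
move=> hlo; rewrite /clrbit bit_bitjoin // /bitjoin.
by case: b => /=; rewrite ?mulnDr ?muln1 ?muln0; lia.
Qed.

Lemma flipbitE k t : flipbit k t = bitjoin t (k %% 2 ^ t) (~~ bit k t) (k %/ 2 ^ t.+1).
Proof. by rewrite {1}(bitjoinE k t) flipbit_bitjoin // mod_pow2_lt. Qed.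

Lemma clrbitE k t : clrbit k t = bitjoin t (k %% 2 ^ t) false (k %/ 2 ^ t.+1).
Proof. by rewrite {1}(bitjoinE k t) clrbit_bitjoin // mod_pow2_lt. Qed.

Lemma flipbitK k t : flipbit (flipbit k t) t = k.
Proof. by rewrite [flipbit k t]flipbitE flipbit_bitjoin ?mod_pow2_lt // negbK -bitjoinE. Qed.

Lemma bit_flipbit k t : bit (flipbit k t) t = ~~ bit k t.
Proof. by rewrite flipbitE bit_bitjoin ?mod_pow2_lt. Qed.

Lemma flipbit_neq k t : flipbit k t != k.
Proof. by apply/eqP => e; have := bit_flipbit k t; rewrite e; case: (bit k t). Qed.

Lemma bit_flipbit_neq k t a : a != t -> bit (flipbit k t) a = bit k a.
Proof.
move=> hat; rewrite flipbitE [in RHS](bitjoinE k t).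
case: (ltngtP a t) hat => // h _; first by rewrite /bitjoin !bitD_high.
by rewrite !bit_bitjoin_high ?mod_pow2_lt.
Qed.

Lemma flipbit_lt k t N : t < N -> k < 2 ^ N -> flipbit k t < 2 ^ N.
Proof.
move=> htN hk; rewrite flipbitE bitjoin_lt ?mod_pow2_lt //.
by rewrite ltn_divLR ?expn_gt0 // -expnD subnK.
Qed.

Lemma clrbit_flipbit k t : clrbit (flipbit k t) t = clrbit k t.
Proof. by rewrite flipbitE clrbit_bitjoin ?mod_pow2_lt // clrbitE. Qed.

Lemma clrbit_eq j k t : clrbit j t = clrbit k t -> j = k \/ j = flipbit k t.
Proof.
rewrite !clrbitE => e.
have elo := congr1 (modn^~ (2 ^ t)) e; have ehi := congr1 (divn^~ (2 ^ t.+1)) e.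
rewrite /= !bitjoin_mod ?bitjoin_div ?mod_pow2_lt // in elo ehi.
move: (bitjoinE j t) (bitjoinE k t); rewrite flipbitE -elo -ehi.
move: (j %% 2 ^ t) (j %/ 2 ^ t.+1) (bit j t) (bit k t) => lo hi [] [] -> ->; by [left|right].
Qed.

Lemma flipbitD_high r t x a : a < t -> flipbit (r + 2 ^ t * x) a = flipbit r a + 2 ^ t * x.
Proof.
move=> hat; rewrite /flipbit bitD_high //; case hb: (bit r a); last by rewrite addnAC.
suff : 2 ^ a <= r by lia.
by move: hb; rewrite /bit; case: leqP => // h; rewrite divn_small.
Qed.

Lemma bit_small k t : k < 2 ^ t -> bit k t = false.
Proof. by move=> hk; rewrite /bit divn_small. Qed.

Lemma flipbit_small k t : k < 2 ^ t -> flipbit k t = k + 2 ^ t.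
Proof. by move=> hk; rewrite /flipbit bit_small. Qed.

Definition bitfield (a n k : nat) : nat := k %/ 2 ^ a %% 2 ^ n.

Lemma bitfield0 a k : bitfield a 0 k = 0.
Proof. by rewrite /bitfield modn1. Qed.

Lemma bitfieldS a n k : bitfield a n.+1 k = bit k a + 2 * bitfield a.+1 n k.
Proof.
rewrite /bitfield /bit [2 ^ a.+1]expnSr divnMA; move: (k %/ 2 ^ a) => x.
have hx := ltn_pmod (x %/ 2) (expn_gt0 2 n).
have {1}-> : x = x %/ 2 %/ 2 ^ n * 2 ^ n.+1 + (odd x + 2 * (x %/ 2 %% 2 ^ n)).
  by rewrite {1}(divn_eq x 2) {1}(divn_eq (x %/ 2) (2 ^ n)) modn2 expnS; lia.
by rewrite modnMDl modn_small // expnS; case: (odd x); lia.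
Qed.

Lemma bitfield_small n k : k < 2 ^ n -> bitfield 0 n k = k.
Proof. by move=> hk; rewrite /bitfield divn1 modn_small. Qed.

Local Open Scope ring_scope.

Section Circuits.
Variable R : rcfType.
Local Notation C := R[i].
Local Notation ket := (ket R).

Lemma ket_delta n (x : 'I_(2 ^ n)) : ket n x = delta_mx x 0.
Proof. by apply/matrixP => i j; rewrite !mxE (ord1 j) eqxx andbT. Qed.

Lemma mulmx_ket p n (A : 'M[C]_(p, 2 ^ n)) (x : 'I_(2 ^ n)) : A *m ket n x = col x A.
Proof. by rewrite ket_delta colE. Qed.

Lemma mx_ketP p n (A B : 'M[C]_(p, 2 ^ n)) :
  (forall k, (k < 2 ^ n)%N -> A *m ket n k = B *m ket n k) -> A = B.
Proof.
move=> eqAB; apply/matrixP => i j.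
by have := congr1 (fun v : 'cV[C]_p => v i 0) (eqAB j (ltn_ord j)); rewrite /= !mulmx_ket !mxE.
Qed.

Lemma ket_sum n (v : 'cV[C]_(2 ^ n)) : v = \sum_(x < 2 ^ n) v x 0 *: ket n x.
Proof.
by rewrite {1}[v]matrix_sum_delta; apply: eq_bigr => x _; rewrite big_ord1 ket_delta.
Qed.

Definition mx2 (U : 'M[C]_2) (i j : bool) : C := U (inord i) (inord j).

Lemma G1_ket n (q : 'I_n) U k : (k < 2 ^ n)%N ->
  gate_mx (G1 q U) *m ket n k =
  mx2 U (bit k q) (bit k q) *: ket n k + mx2 U (~~ bit k q) (bit k q) *: ket n (flipbit k q).
Proof.
move=> hk; apply/matrixP => i j; rewrite (mulmx_ket _ (Ordinal hk)) !mxE /mx2 /=.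
case: (eqVneq (i : nat) k) => [->|hik].
  by rewrite eqxx mulr1 [k == _]eq_sym (negbTE (flipbit_neq _ _)) mulr0 addr0.
case: (eqVneq (i : nat) (flipbit k q)) => [->|hif].
  by rewrite clrbit_flipbit eqxx bit_flipbit mulr1 mulr0 add0r.
rewrite !mulr0 addr0; case: eqP => // /clrbit_eq [] e.
  by rewrite e eqxx in hik.
by rewrite e eqxx in hif.
Qed.

Definition cnot_index (a t k : nat) : nat := if bit k a then flipbit k t else k.

Lemma CNOT_ket n (a t : 'I_n) k : (k < 2 ^ n)%N ->
  gate_mx (CNOT R a t) *m ket n k = ket n (cnot_index a t k).
Proof. by move=> hk; apply/matrixP => i j; rewrite (mulmx_ket _ (Ordinal hk)) !mxE. Qed.

Lemma cnot_indexK a t : a != t -> involutive (cnot_index a t).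
Proof.
move=> hat k; rewrite /cnot_index; case hb: (bit k a); last by rewrite hb.
by rewrite bit_flipbit_neq // hb flipbitK.
Qed.

Lemma cnot_index_lt n (a t : 'I_n) k : (k < 2 ^ n)%N -> (cnot_index a t k < 2 ^ n)%N.
Proof. by rewrite /cnot_index; case: ifP => // _; apply: flipbit_lt. Qed.

Lemma circuit_mx_cons n g (c : circuit R n) :
  circuit_mx (g :: c) = circuit_mx c *m gate_mx g.
Proof.
rewrite /circuit_mx /= mulmx1; elim: c (gate_mx g) => [|g' c IH] A /=.
  by rewrite mul1mx.
by rewrite IH [in RHS]IH mulmx1 mulmxA.
Qed.

Lemma circuit_mx_cat n (c1 c2 : circuit R n) :
  circuit_mx (c1 ++ c2) = circuit_mx c2 *m circuit_mx c1.
Proof.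
elim: c1 => [|g c1 IH] /=; first by rewrite mulmx1.
by rewrite !circuit_mx_cons IH mulmxA.
Qed.

Lemma circuit_mx_rcons n g (c : circuit R n) :
  circuit_mx (rcons c g) = gate_mx g *m circuit_mx c.
Proof. by rewrite -cats1 circuit_mx_cat circuit_mx_cons mul1mx. Qed.

Lemma circuit_ok_cat n (c1 c2 : circuit R n) :
  circuit_ok (c1 ++ c2) <-> circuit_ok c1 /\ circuit_ok c2.
Proof.
elim: c1 => [|g c1 IH] /=; first by split => // -[].
by rewrite IH; split => [[? [? ?]]|[[? ?] ?]].
Qed.

End Circuits.

Section Unitary.
Variable R : rcfType.
Local Notation C := R[i].

Lemma adjmxE p q (A : 'M[C]_(p, q)) i j : adjmx A i j = (A j i)^*%C.
Proof. by rewrite !mxE. Qed.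

Lemma adjmxM p q r (A : 'M[C]_(p, q)) (B : 'M[C]_(q, r)) :
  adjmx (A *m B) = adjmx B *m adjmx A.
Proof. by rewrite /adjmx map_mxM trmx_mul. Qed.

Lemma adjmxK p q : cancel (@adjmx R p q) (@adjmx R q p).
Proof. by move=> A; apply/matrixP => i j; rewrite !adjmxE conjcK. Qed.

Lemma adjmx1 n : adjmx (1%:M : 'M[C]_n) = 1%:M.
Proof. by rewrite /adjmx map_mx1 trmx1. Qed.

Lemma is_unitary_mx1 n : is_unitary_mx (1%:M : 'M[C]_n).
Proof. by rewrite /is_unitary_mx adjmx1 mulmx1. Qed.

Lemma is_unitary_mxM n (A B : 'M[C]_n) :
  is_unitary_mx A -> is_unitary_mx B -> is_unitary_mx (A *m B).
Proof.
rewrite /is_unitary_mx => uA uB.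
by rewrite adjmxM mulmxA -(mulmxA A) uB mulmx1 uA.
Qed.

Lemma is_unitary_adjmx n (A : 'M[C]_n) : is_unitary_mx A -> is_unitary_mx (adjmx A).
Proof. by rewrite /is_unitary_mx adjmxK => /mulmx1C. Qed.

Lemma mx2M (U V : 'M[C]_2) i j :
  mx2 (U *m V) i j = mx2 U i false * mx2 V false j + mx2 U i true * mx2 V true j.
Proof.
rewrite /mx2 mxE big_ord_recr big_ord1 /=.
by congr (_ * _ + _ * _); congr (_ _ _); apply: val_inj; rewrite /= inordK.
Qed.

Lemma G1M n (q : 'I_n) (U V : 'M[C]_2) :
  gate_mx (G1 q U) *m gate_mx (G1 q V) = gate_mx (G1 q (U *m V)).
Proof.
have regroup (x y : 'cV[C]_(2 ^ n)) a b c d e f :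
    a *: (b *: x + c *: y) + d *: (e *: y + f *: x)
    = (a * b + d * f) *: x + (a * c + d * e) *: y.
  by rewrite !scalerDr !scalerA !scalerDl -!addrA; congr (_ + _); rewrite [RHS]addrC addrA.
apply: mx_ketP => k hk.
rewrite -mulmxA !G1_ket // mulmxDr -!scalemxAr !G1_ket ?flipbit_lt //.
rewrite bit_flipbit flipbitK negbK !mx2M.
by case: (bit k q) => /=; rewrite regroup; congr (_ *: _ + _ *: _); ring.
Qed.

Lemma G1_1 n (q : 'I_n) : gate_mx (G1 q (1%:M : 'M[C]_2)) = 1%:M.
Proof.
apply: mx_ketP => k hk; rewrite G1_ket // mul1mx /mx2 !mxE.
have neq_inord (b : bool) : ((inord b : 'I_2) == inord (~~ b)) = false.
  by case: b; apply/negP => /eqP /(congr1 val); rewrite /= !inordK.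
by rewrite [inord (~~ _) == _]eq_sym neq_inord eqxx scale1r scale0r addr0.
Qed.

Lemma adjmx_G1 n (q : 'I_n) (U : 'M[C]_2) :
  adjmx (gate_mx (G1 q U)) = gate_mx (G1 q (adjmx U)).
Proof.
apply/matrixP => i j; rewrite adjmxE !mxE eq_sym.
by case: ifP => _; rewrite ?conjc0 // adjmxE.
Qed.

Lemma adjmx_CNOT n (a t : 'I_n) : a != t ->
  adjmx (gate_mx (CNOT R a t)) = gate_mx (CNOT R a t).
Proof.
move=> hat; apply/matrixP => i j; rewrite adjmxE !mxE conjc_nat.
have [ei|ni] := eqVneq (j : nat) (cnot_index a t i);
  have [ej|nj] := eqVneq (i : nat) (cnot_index a t j) => //.
- by move/eqP: nj; rewrite ei cnot_indexK.
- by move/eqP: ni; rewrite ej cnot_indexK.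
Qed.

Lemma CNOT_involutive n (a t : 'I_n) : a != t ->
  gate_mx (CNOT R a t) *m gate_mx (CNOT R a t) = 1%:M.
Proof.
move=> hat; apply: mx_ketP => k hk.
by rewrite -mulmxA !CNOT_ket ?cnot_index_lt // cnot_indexK // mul1mx.
Qed.

Lemma gate_unitary n (g : gate R n) : gate_ok g -> is_unitary_mx (gate_mx g).
Proof.
rewrite /is_unitary_mx; case: g => [q U|a t] /= ok.
  by rewrite adjmx_G1 G1M ok G1_1.
by have /eqP hat := ok; rewrite adjmx_CNOT // CNOT_involutive.
Qed.

Lemma circuit_unitary n (c : circuit R n) : circuit_ok c -> is_unitary_mx (circuit_mx c).
Proof.
elim/last_ind: c => [_|c g IH]; first exact: is_unitary_mx1.
rewrite -cats1 => /circuit_ok_cat [okc [okg _]].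
by rewrite cats1 circuit_mx_rcons; apply: is_unitary_mxM; [apply: gate_unitary|apply: IH].
Qed.

Definition adj_gate n (g : gate R n) : gate R n :=
  if g is G1 q U then G1 q (adjmx U) else g.

Definition adj_circuit n (c : circuit R n) : circuit R n := rev (map (@adj_gate n) c).

Lemma size_adj_circuit n (c : circuit R n) : size (adj_circuit c) = size c.
Proof. by rewrite size_rev size_map. Qed.

Lemma adj_circuit_ok n (c : circuit R n) : circuit_ok c -> circuit_ok (adj_circuit c).
Proof.
elim: c => [|g c IH] //= [okg okc]; rewrite /adj_circuit /= rev_cons -cats1.
apply/circuit_ok_cat; split; first exact: IH.
by split => //; case: g okg => //= q U; apply: is_unitary_adjmx.
Qed.

Lemma circuit_mx_adj n (c : circuit R n) : circuit_ok c ->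
  circuit_mx (adj_circuit c) = adjmx (circuit_mx c).
Proof.
elim: c => [_|g c IH [okg okc]]; first by rewrite adjmx1.
rewrite /adj_circuit /= rev_cons circuit_mx_rcons circuit_mx_cons adjmxM -IH //.
congr (_ *m _); case: g okg => [q U|a t] /= ok; first by rewrite adjmx_G1.
by rewrite adjmx_CNOT //; apply/eqP.
Qed.

End Unitary.

Section Rotations.
Variable R : rcfType.
Local Notation C := R[i].
Local Notation Re := complex.Re.
Local Notation Im := complex.Im.

(* Angles are unit complex numbers, so that composing rotations multiplies them. *)
Definition rotmx (z : C) : 'M[C]_2 := \matrix_(i, j)
  (if i == j then (Re z)%:C%C else if (i : nat) == 1%N then (Im z)%:C%C else (- Im z)%:C%C).

Definition notmx : 'M[C]_2 := \matrix_(i, j) (i != j)%:R.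

Lemma mx2_rotmx z i j : mx2 (rotmx z) i j =
  if i == j then (Re z)%:C%C else if i then (Im z)%:C%C else (- Im z)%:C%C.
Proof.
rewrite /mx2 mxE inordK; last by case: i.
by case: i; case: j; rewrite /= -val_eqE /= !inordK.
Qed.

Lemma rotmxM z w : rotmx z *m rotmx w = rotmx (z * w).
Proof.
apply/matrixP => i j; rewrite !mxE big_ord_recr big_ord1 /= !mxE.
case: z w => a b [c d].
case: i => [[|[|?]] ?] //; case: j => [[|[|?]] ?] //=; simpc;
  by apply: (congr2 (@Complex R)) => //; ring.
Qed.

Lemma rotmx1 : rotmx 1 = 1%:M.
Proof.
apply/matrixP => i j; rewrite !mxE.
by case: i => [[|[|?]] ?] //; case: j => [[|[|?]] ?] //=; rewrite oppr0.
Qed.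

Lemma adjmx_rotmx z : adjmx (rotmx z) = rotmx z^*%C.
Proof.
apply/matrixP => i j; rewrite adjmxE !mxE eq_sym; case: z => a b.
by case: i => [[|[|?]] ?] //; case: j => [[|[|?]] ?] //=; rewrite ?opprK oppr0.
Qed.

Lemma is_unitary_rotmx z : `|z| = 1 -> is_unitary_mx (rotmx z).
Proof.
by move=> z1; rewrite /is_unitary_mx adjmx_rotmx rotmxM -sqr_normc z1 expr1n rotmx1.
Qed.

Lemma mx2_notmx i j : mx2 notmx i j = (i != j)%:R.
Proof. by rewrite /mx2 mxE -val_eqE /= !inordK //; case: i; case: j. Qed.

Lemma notmx_rotmx z : notmx *m rotmx z *m notmx = rotmx z^*%C.
Proof.
apply/matrixP => i j; rewrite mxE big_ord_recr big_ord1 /= !mxE.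
rewrite !big_ord_recr !big_ord0 /= !mxE.
case: z => a b.
case: i => [[|[|?]] ?] //; case: j => [[|[|?]] ?] //=; by simpc.
Qed.

End Rotations.

Section UniformlyControlled.
Variable R : rcfType.
Local Notation C := R[i].
Local Notation ket := (ket R).
Variables (N : nat) (t : 'I_N).

(* A gate on qubit t uniformly controlled by the other qubits, which select F k. *)
Definition ucgate (A : 'M[C]_(2 ^ N)) (F : nat -> 'M[C]_2) : Prop :=
  forall k, (k < 2 ^ N)%N ->
    F (flipbit k t) = F k /\ A *m ket N k = gate_mx (G1 t (F k)) *m ket N k.

Lemma ucgate_eq A F G : ucgate A F ->
  (forall k, (k < 2 ^ N)%N -> F k = G k) -> ucgate A G.
Proof.
move=> ucA eFG k hk; have [hF hA] := ucA k hk.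
by rewrite -!eFG ?flipbit_lt.
Qed.

Lemma ucgate_G1 U : ucgate (gate_mx (G1 t U)) (fun=> U).
Proof. by []. Qed.

Lemma ucgate_CNOT (a : 'I_N) : a != t ->
  ucgate (gate_mx (CNOT R a t)) (fun k => if bit k a then notmx R else 1%:M).
Proof.
move=> hat k hk; rewrite bit_flipbit_neq //; split => //.
rewrite CNOT_ket // /cnot_index; case: (bit k a); last by rewrite G1_1 mul1mx.
by rewrite G1_ket // !mx2_notmx; case: (bit k t); rewrite /= scale0r add0r scale1r.
Qed.

Lemma ucgateM A B F G : ucgate A F -> ucgate B G ->
  ucgate (B *m A) (fun k => G k *m F k).
Proof.
move=> ucA ucB k hk; have [FfF AF] := ucA k hk; have [GfG BG] := ucB k hk.
have [_ Bf] := ucB _ (flipbit_lt (ltn_ord t) hk).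
split; first by rewrite FfF GfG.
by rewrite -mulmxA AF -G1M -mulmxA G1_ket // !mulmxDr -!scalemxAr BG Bf GfG.
Qed.

(* The two halves of [ucr] compose to [beta * alpha] or, when the control bit is set,
   to [conj beta * alpha] (notmx_rotmx); alpha is a square root of th (2j) th (2j+1)
   so that these are th (2j) and th (2j+1). *)
Definition ucr_alpha (th : nat -> C) (j : nat) : C := sqrtc (th (2 * j)%N * th (2 * j).+1).
Definition ucr_beta (th : nat -> C) (j : nat) : C := (th (2 * j).+1)^*%C * ucr_alpha th j.

Lemma ucr_alpha_beta (th : nat -> C) j : `|th (2 * j)%N| = 1 -> `|th (2 * j).+1| = 1 ->
  [/\ ucr_beta th j * ucr_alpha th j = th (2 * j)%N,
      (ucr_beta th j)^*%C * ucr_alpha th j = th (2 * j).+1,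
      `|ucr_alpha th j| = 1 & `|ucr_beta th j| = 1].
Proof.
rewrite /ucr_beta; have := sqr_sqrtc (th (2 * j)%N * th (2 * j).+1).
rewrite -/(ucr_alpha th j).
move: (ucr_alpha th j) (th (2 * j)%N) (th (2 * j).+1) => al z0 z1 al2 n0 n1.
have nal : `|al| = 1.
  by apply/eqP; rewrite -(sqrp_eq1 (normr_ge0 _)) -normrX al2 normrM n0 n1 mulr1.
split => //.
- by rewrite -mulrA -expr2 al2 mulrCA [z1^*%C * z1]mulrC -sqr_normc n1 expr1n mulr1.
- by rewrite rmorphM /= conjcK -mulrA [al^*%C * al]mulrC -sqr_normc nal expr1n mulr1.
- by rewrite normrM normcJ n1 nal mulr1.
Qed.

Lemma ucr_phases_unit (th : nat -> C) : (forall j, `|th j| = 1) ->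
  (forall j, `|ucr_alpha th j| = 1) /\ (forall j, `|ucr_beta th j| = 1).
Proof. by move=> th1; split => j; have [] := @ucr_alpha_beta th j (th1 _) (th1 _). Qed.

Lemma ucr_control (a : nat) : (a < t)%N -> insubd t a = a :> nat /\ insubd t a != t.
Proof.
move=> hat; have ha : insubd t a = a :> nat by rewrite val_insubd (ltn_trans hat (ltn_ord t)).
by split; rewrite // -val_eqE /= ha (ltn_eqF hat).
Qed.

(* [insubd t a] is qubit [a]; [t] is only the default of [insubd]. *)
Fixpoint ucr (a n : nat) (th : nat -> C) : circuit R N :=
  if n is n'.+1 then
    ucr a.+1 n' (ucr_alpha th) ++
    CNOT R (insubd t a) t :: ucr a.+1 n' (ucr_beta th) ++ [:: CNOT R (insubd t a) t]
  else [:: G1 t (rotmx (th 0%N))].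

Lemma size_ucr a n th : (size (ucr a n th) + 2 = 3 * 2 ^ n)%N.
Proof.
elim: n a th => [|n IH] a th //=; rewrite size_cat /= size_cat /= expnS.
by have := IH a.+1 (ucr_alpha th); have := IH a.+1 (ucr_beta th); lia.
Qed.

Lemma ucr_ok a n th : (forall j, `|th j| = 1) -> (a + n <= t)%N -> circuit_ok (ucr a n th).
Proof.
elim: n a th => [|n IH] a th th1 hant /=; first by split => //; apply: is_unitary_rotmx.
have hat : (a < t)%N by lia.
have [_ /eqP hcn] := ucr_control hat.
have [al1 be1] := ucr_phases_unit th1.
apply/circuit_ok_cat; split; first by apply: IH => //; lia.
by split => //; apply/circuit_ok_cat; split; first by apply: IH => //; lia.
Qed.

Lemma ucr_ucgate a n th : (forall j, `|th j| = 1) -> (a + n <= t)%N ->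
  ucgate (circuit_mx (ucr a n th)) (fun k => rotmx (th (bitfield a n k))).
Proof.
elim: n a th => [|n IH] a th th1 hant.
  rewrite /circuit_mx /= mulmx1.
  by apply: ucgate_eq (ucgate_G1 _) _ => k _; rewrite bitfield0.
have hat : (a < t)%N by lia.
have [ha hcn] := ucr_control hat.
have [al1 be1] := ucr_phases_unit th1.
have hant' : (a.+1 + n <= t)%N by lia.
rewrite /= !(circuit_mx_cat, circuit_mx_cons) mul1mx.
apply: ucgate_eq (ucgateM (IH _ _ al1 hant') (ucgateM (ucgate_CNOT hcn)
  (ucgateM (IH _ _ be1 hant') (ucgate_CNOT hcn)))) _ => k _.
have [e0 e1 _ _] := @ucr_alpha_beta th (bitfield a.+1 n k) (th1 _) (th1 _).
rewrite bitfieldS ha; case: (bit k a); rewrite ?mul1mx ?mulmx1 ?notmx_rotmx rotmxM.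
  by rewrite e1.
by rewrite e0.
Qed.

End UniformlyControlled.

Lemma sum_pow2S (V : nmodType) n (F : nat -> V) :
  \sum_(k < 2 ^ n.+1) F k = \sum_(j < 2 ^ n) F j + \sum_(j < 2 ^ n) F (j + 2 ^ n)%N.
Proof.
rewrite -!(big_mkord xpredT) expnS mul2n -addnn (big_cat_nat _ (leq_addr _ _)) //=.
by congr (_ + _); rewrite -{1}(add0n (2 ^ n)%N) big_addn addnK big_mkord.
Qed.

Section StatePreparation.
Variable R : rcfType.
Local Notation C := R[i].
Local Notation ket := (ket R).
(* [d] is only the default of [insubd]: [prep n] acts on qubits 0, ..., n - 1. *)
Variables (N : nat) (d : 'I_N).

Definition pair_norm n (v : nat -> R) j : R := Num.sqrt (v j ^+ 2 + v (j + 2 ^ n)%N ^+ 2).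

Definition pair_phase n (v : nat -> R) j : C :=
  let r := pair_norm n v j in
  if r == 0 then 1 else Complex (v j / r) (v (j + 2 ^ n)%N / r).

Lemma pair_norm_sqr n v j : pair_norm n v j ^+ 2 = v j ^+ 2 + v (j + 2 ^ n)%N ^+ 2.
Proof. by rewrite sqr_sqrtr // addr_ge0 ?sqr_ge0. Qed.

Lemma norm_pair_phase n v j : `|pair_phase n v j| = 1.
Proof.
rewrite /pair_phase; case: eqP => [_|/eqP r0]; first by rewrite normr1.
simpc; rewrite !expr_div_n -mulrDl -pair_norm_sqr divff ?sqrtr1 //.
by rewrite expf_neq0.
Qed.

Lemma pair_norm_phase n v j :
  pair_norm n v j * complex.Re (pair_phase n v j) = v j /\
  pair_norm n v j * complex.Im (pair_phase n v j) = v (j + 2 ^ n)%N.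
Proof.
rewrite /pair_phase; case: eqP => [r0|/eqP r0]; last by split; rewrite mulrC divfK.
have /eqP := pair_norm_sqr n v j; rewrite r0 expr0n eq_sym paddr_eq0 ?sqr_ge0 //.
by rewrite !sqrf_eq0 mulr0 mulr1 => /andP [/eqP -> /eqP ->].
Qed.

Lemma sum_pair_norm n v :
  \sum_(j < 2 ^ n) pair_norm n v j ^+ 2 = \sum_(k < 2 ^ n.+1) v k ^+ 2.
Proof.
rewrite (sum_pow2S _ (fun k => v k ^+ 2)) -big_split.
by apply: eq_bigr => j _; rewrite pair_norm_sqr.
Qed.

Fixpoint prep (n : nat) (v : nat -> R) : circuit R N :=
  if n is n'.+1 then prep n' (pair_norm n' v) ++ ucr (insubd d n') 0 n' (pair_phase n' v)
  else [::].

Lemma size_prep n v : (size (prep n v) <= 3 * 2 ^ n)%N.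
Proof.
elim: n v => [|n IH] v //=; rewrite size_cat expnS.
by have := IH (pair_norm n v); have := size_ucr (insubd d n) 0 n (pair_phase n v); lia.
Qed.

Lemma prep_ok n v : (n <= N)%N -> circuit_ok (prep n v).
Proof.
elim: n v => [|n IH] v hnN //=; apply/circuit_ok_cat; split; first by apply: IH; lia.
by apply: ucr_ok => [j|]; rewrite ?norm_pair_phase // val_insubd hnN.
Qed.

(* The empty circuit only prepares v 0 = 1, whence the sign condition at n = 0; the
   recursive calls receive nonnegative pair norms. *)
Lemma prep_ket n (v : nat -> R) : (n <= N)%N -> \sum_(k < 2 ^ n) v k ^+ 2 = 1 ->
  (n = 0%N -> 0 <= v 0%N) ->
  circuit_mx (prep n v) *m ket N 0 = \sum_(k < 2 ^ n) (v k)%:C%C *: ket N k.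
Proof.
elim: n v => [|n IH] v hnN v1 v0.
  rewrite big_ord1 /= in v1; rewrite mul1mx big_ord1 /=.
  suff -> : v 0%N = 1 by rewrite scale1r.
  by apply/eqP; rewrite -(sqrp_eq1 (v0 erefl)) v1.
rewrite /= circuit_mx_cat -mulmxA IH ?sum_pair_norm ?sqrtr_ge0 //; last by lia.
have ht : insubd d n = n :> nat by rewrite val_insubd hnN.
rewrite mulmx_sumr (sum_pow2S _ (fun k => (v k)%:C%C *: ket N k)) -big_split /=.
apply: eq_bigr => j _; rewrite -scalemxAr; have hj : (j < 2 ^ N)%N.
  by apply: leq_trans (ltn_ord j) _; rewrite leq_exp2l // ltnW.
have hle : (0 + n <= insubd d n)%N by rewrite ht.
have [_ ->] := ucr_ucgate (norm_pair_phase n v) hle hj.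
rewrite G1_ket // !mx2_rotmx ht bit_small // flipbit_small // bitfield_small //=.
rewrite scalerDr !scalerA -!rmorphM /=.
by have [-> ->] := pair_norm_phase n v j.
Qed.

End StatePreparation.

Section Lift.
Variable R : rcfType.
Local Notation C := R[i].
Local Notation ket := (ket R).
Variables m b : nat.

Definition lift_gate (g : gate R m) : gate R (m + b) :=
  match g with
  | G1 q U => G1 (lshift b q) U
  | CNOT a t => CNOT R (lshift b a) (lshift b t)
  end.

Lemma lift_circuit_ok (c : circuit R m) : circuit_ok c -> circuit_ok (map lift_gate c).
Proof.
elim: c => [|g c IH] //= [okg okc]; split; last exact: IH.
by case: g okg => [q U|a t] //= hat e; apply/hat/val_inj; exact: (congr1 val e).
Qed.

Definition embedmx (y : nat) : 'M[C]_(2 ^ (m + b), 2 ^ m) :=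
  \matrix_(i, j) ((i : nat) == (j + 2 ^ m * y)%N)%:R.

Lemma embedmx_ket y x : (x < 2 ^ m)%N ->
  embedmx y *m ket m x = ket (m + b) (x + 2 ^ m * y)%N.
Proof. by move=> hx; rewrite (mulmx_ket _ (Ordinal hx)); apply/matrixP => i j; rewrite !mxE. Qed.

Lemma embedmxE y (v : 'cV[C]_(2 ^ m)) :
  embedmx y *m v = \sum_(x < 2 ^ m) v x 0 *: ket (m + b) (x + 2 ^ m * y)%N.
Proof.
by rewrite {1}[v]ket_sum mulmx_sumr; apply: eq_bigr => x _; rewrite -scalemxAr embedmx_ket.
Qed.

Lemma embed_index_lt x y : (x < 2 ^ m)%N -> (y < 2 ^ b)%N -> (x + 2 ^ m * y < 2 ^ (m + b))%N.
Proof.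
move=> hx hy; rewrite expnD.
have : (2 ^ m * y.+1 <= 2 ^ m * 2 ^ b)%N by rewrite leq_mul2l hy orbT.
by lia.
Qed.

Lemma lift_gate_embedmx y g : (y < 2 ^ b)%N ->
  gate_mx (lift_gate g) *m embedmx y = embedmx y *m gate_mx g.
Proof.
move=> hy; apply: mx_ketP => x hx; rewrite -!mulmxA embedmx_ket //.
have hxy := embed_index_lt hx hy.
case: g => [q U|a t]; rewrite [lift_gate _]/=.
  rewrite !G1_ket ?flipbit_lt // mulmxDr -!scalemxAr !embedmx_ket ?flipbit_lt //.
  by rewrite !(bitD_high _ _ (ltn_ord q)) (flipbitD_high _ _ (ltn_ord q)).
rewrite !CNOT_ket // embedmx_ket ?cnot_index_lt // /cnot_index (bitD_high _ _ (ltn_ord a)).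
by case: ifP => // _; rewrite (flipbitD_high _ _ (ltn_ord t)).
Qed.

Lemma lift_circuit_embedmx y (c : circuit R m) : (y < 2 ^ b)%N ->
  circuit_mx (map lift_gate c) *m embedmx y = embedmx y *m circuit_mx c.
Proof.
move=> hy; elim/last_ind: c => [|c g IH]; first by rewrite mul1mx mulmx1.
by rewrite map_rcons !circuit_mx_rcons -mulmxA IH mulmxA lift_gate_embedmx // mulmxA.
Qed.

Lemma lift_implements_borrowed (c : circuit R m) :
  implements_borrowed (map lift_gate c) (circuit_mx c).
Proof.
move=> x y hy; rewrite -embedmx_ket // mulmxA lift_circuit_embedmx // -mulmxA embedmxE.
by apply: eq_bigr => x' _; rewrite mulmx_ket !mxE.
Qed.

End Lift.

Lemma lift_implements_ancilla (R : rcfType) m (c : circuit R m) :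
  implements_ancilla (map (@lift_gate R m 1) c) (circuit_mx c).
Proof.
move=> x; have := @lift_implements_borrowed R m 1 c x 0 isT.
rewrite muln0 addn0 => ->.
by apply: eq_bigr => x' _; rewrite addn0.
Qed.

Lemma real_state_prep (R : rcfType) m (v : nat -> R) :
  (0 < m)%N -> \sum_(k < 2 ^ m) v k ^+ 2 = 1 ->
  exists c : circuit R m, [/\ circuit_ok c,
    circuit_mx c *m ket R m 0 = \sum_(k < 2 ^ m) (v k)%:C%C *: ket R m k &
    (size c <= 3 * 2 ^ m)%N].
Proof.
move=> m0 v1; exists (prep (Ordinal m0) m v); split.
- exact: prep_ok.
- by apply: prep_ket => // em; rewrite em in m0.
- exact: size_prep.
Qed.

Definition extend0 (V : nmodType) M (f : 'I_M -> V) (k : nat) : V :=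
  if insub k is Some l then f l else 0.

Lemma sum_extend0 (V W : nmodType) M n (f : 'I_M -> V) (g : nat -> V -> W) :
  (M <= n)%N -> (forall k, g k 0 = 0) ->
  \sum_(k < n) g k (extend0 f k) = \sum_(l < M) g l (f l).
Proof.
move=> Mn g0; have -> : \sum_(l < M) g l (f l) = \sum_(l < M) g l (extend0 f l).
  by apply: eq_bigr => l _; rewrite /extend0 valK.
rewrite (big_ord_widen _ (fun k => g k (extend0 f k)) Mn) [RHS]big_mkcond /=.
by apply: eq_bigr => k _; case: ifP => // kM; rewrite /extend0 insubN ?kM.
Qed.

Lemma up_log2_bounds M : (1 < M)%N ->
  [/\ 0 < up_log 2 M, M <= 2 ^ up_log 2 M & 2 ^ up_log 2 M < 2 * M]%N.
Proof.
move=> M1; have [lo hi] := andP (up_log_bounds (isT : 1 < 2)%N M1).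
have m0 : (0 < up_log 2 M)%N by rewrite up_log_gt0 M1.
by split => //; rewrite -[up_log 2 M]prednK // expnS ltn_mul2l.
Qed.

Lemma padded_state_prep (R : rcfType) M (f : 'I_M -> R) :
  (1 < M)%N -> \sum_(l < M) f l ^+ 2 = 1 ->
  exists c : circuit R (up_log 2 M), [/\ circuit_ok c,
    circuit_mx c *m ket R (up_log 2 M) 0 = \sum_(l < M) (f l)%:C%C *: ket R (up_log 2 M) l &
    (size c <= 6 * M)%N].
Proof.
move=> M1 f1; have [m0 Mm mM] := up_log2_bounds M1.
have [|c [ok cE sz]] := @real_state_prep R _ (extend0 f) m0.
  by rewrite (@sum_extend0 _ _ _ _ f (fun _ x => x ^+ 2)) // => k; rewrite expr0n.
exists c; split => //; last by lia.
by rewrite cE (@sum_extend0 _ _ _ _ f (fun k x => x%:C%C *: ket R _ k)) // => k; rewrite scale0r.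
Qed.

Lemma wavelet_abs_sum_gt0 (R : rcfType) M (h : 'I_M -> R) :
  wavelet_filter h -> 0 < \sum_(l < M) `|h l|.
Proof.
case=> hsum _; apply: lt_le_trans (ler_norm_sum _ _ _).
by rewrite hsum ger0_norm ?sqrtr_ge0 // sqrtr_gt0.
Qed.

Lemma sum_sqr_normalized (R : rcfType) M (h g : 'I_M -> R) :
  0 < \sum_(l < M) `|h l| -> (forall l, g l ^+ 2 = `|h l| / \sum_(l < M) `|h l|) ->
  \sum_(l < M) g l ^+ 2 = 1.
Proof. by move=> hs0 hg; rewrite (eq_bigr _ (fun l _ => hg l)) -mulr_suml divff ?gt_eqF. Qed.

Lemma sqr_sg_sqrt_norm (R : rcfType) (x : R) : (Num.sg x * Num.sqrt `|x|) ^+ 2 = `|x|.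
Proof.
by rewrite exprMn sqr_sg sqr_sqrtr ?normr_ge0 //; case: eqP => [->|]; rewrite ?normr0 ?mulr0 ?mul1r.
Qed.

Lemma gate_count_log (R : numDomainType) K M m s :
  (s <= K * M)%N -> (0 < m)%N -> s%:R <= K%:R * (M * m)%:R :> R.
Proof.
by move=> sz m0; rewrite -natrM ler_nat; apply: leq_trans sz _; rewrite mulnA leq_pmulr.
Qed.

Lemma gate_count_sqrt (R : rcfType) K M s :
  (s <= K * M)%N -> (0 < M)%N -> s%:R <= K%:R * M%:R * Num.sqrt M%:R :> R.
Proof.
move=> sz M0; have sqrtM1 : 1 <= Num.sqrt (M%:R : R) by rewrite -{1}sqrtr1 ler_sqrt ?ler0n // ler1n.
apply: le_trans (_ : (K * M)%:R <= _); first by rewrite ler_nat.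
by rewrite natrM ler_peMr ?mulr_ge0.
Qed.

Theorem lemma5 (R : rcfType) :
  exists K : R, 0 < K /\
  forall (M : nat) (h : 'I_M -> R),
    (0 < M)%N -> ~~ odd M -> wavelet_filter h ->
    let m := up_log 2 M in
    let hs := \sum_(l < M) `|h l| in
    (* (i) LINPREP with O(M log2 M) gates and m borrowed qubits *)
    (exists (LINPREP : 'M[R[i]]_(2 ^ m)) (c : circuit R (m + m)),
        is_unitary_mx LINPREP /\
        LINPREP *m ket R m 0 = \sum_(l < M) (real_complex R (h l)) *: ket R m l /\
        circuit_ok c /\ implements_borrowed c LINPREP /\
        (size c)%:R <= K * (M * m)%:R) /\
    (* (ii) PREP with O(M^{3/2}) gates and one ancilla *)
    (exists (PREP : 'M[R[i]]_(2 ^ m)) (c : circuit R (m + 1)),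
        is_unitary_mx PREP /\
        PREP *m ket R m 0 = \sum_(l < M)
           (real_complex R (Num.sqrt `|h l| / Num.sqrt hs)) *: ket R m l /\
        circuit_ok c /\ implements_ancilla c PREP /\
        (size c)%:R <= K * M%:R * Num.sqrt M%:R) /\
    (* (ii) UNPREP with O(M^{3/2}) gates and one ancilla *)
    (exists (UNPREP : 'M[R[i]]_(2 ^ m)) (c : circuit R (m + 1)),
        is_unitary_mx UNPREP /\
        adjmx UNPREP *m ket R m 0 = \sum_(l < M)
           (real_complex R (Num.sg (h l) * Num.sqrt `|h l| / Num.sqrt hs))
             *: ket R m l /\
        circuit_ok c /\ implements_ancilla c UNPREP /\
        (size c)%:R <= K * M%:R * Num.sqrt M%:R).
Proof.
exists 6; split => // M h M0 Meven hw m hs.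
have M1 : (1 < M)%N by case: M M0 Meven {h hw m hs} => [|[|]].
have [m0 _ _] := up_log2_bounds M1.
have hs0 : 0 < hs := wavelet_abs_sum_gt0 hw.
have prep_normalized (g : 'I_M -> R) : (forall l, g l ^+ 2 = `|h l| / hs) ->
    exists c : circuit R m, [/\ circuit_ok c,
      circuit_mx c *m ket R m 0 = \sum_(l < M) (g l)%:C%C *: ket R m l & (size c <= 6 * M)%N].
  by move=> hg; apply: padded_state_prep => //; apply: sum_sqr_normalized hg.
split; [|split].
- have [c [ok cE sz]] := padded_state_prep M1 hw.2.
  exists (circuit_mx c), (map (@lift_gate R m m) c); rewrite size_map.
  by do !split; [apply: circuit_unitary | done | apply: lift_circuit_ok
                | apply: lift_implements_borrowed | apply: gate_count_log].
- have [|c [ok cE sz]] := prep_normalized (fun l => Num.sqrt `|h l| / Num.sqrt hs).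
    by move=> l; rewrite expr_div_n !sqr_sqrtr ?(ltW hs0).
  exists (circuit_mx c), (map (@lift_gate R m 1) c); rewrite size_map.
  by do !split; [apply: circuit_unitary | done | apply: lift_circuit_ok
                | apply: lift_implements_ancilla | apply: gate_count_sqrt].
- have [|c [ok cE sz]] := prep_normalized (fun l => Num.sg (h l) * Num.sqrt `|h l| / Num.sqrt hs).
    by move=> l; rewrite expr_div_n sqr_sg_sqrt_norm sqr_sqrtr ?(ltW hs0).
  exists (adjmx (circuit_mx c)), (map (@lift_gate R m 1) (adj_circuit c)).
  rewrite size_map size_adj_circuit adjmxK -circuit_mx_adj //.
  by do !split; [apply/circuit_unitary/adj_circuit_ok | done | apply/lift_circuit_ok/adj_circuit_ok
                | apply: lift_implements_ancilla | apply: gate_count_sqrt].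
Qed.
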